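(* Let $k \geq 3$ be an odd integer. Any non-reducible partial $k$-star design of order $3k+1$ with four stars is completable.
   Context: A $k$-star is a copy of $K_{1,k}$; its vertex of degree $k$ is the centre and the others are leaves. A partial $k$-star design of order $n$ is a pair $(V,\mathcal{A})$ where $V$ is a set of $n$ vertices and $\mathcal{A}$ is a set of edge-disjoint $k$-stars that are subgraphs of the complete graph $K_V$; it is completable if there is a set $\mathcal{B}\supseteq\mathcal{A}$ of edge-disjoint $k$-stars in $K_V$ covering all edges of $K_V$. Let \[u(n,k)= \begin{cases} 2 \lfloor \frac{n-2}{k} \rfloor-1 & \text{if $n \not \equiv 1\pmod{k}$},\\ \frac{2(n-1)}{k} - 2 & \text{if $n \equiv 1\pmod{k}$.} \end{cases} \] A partial $k$-star design $(V,\mathcal{A})$ of order $n$ is reducible if $n \equiv 1 \pmod{k}$, $|\mathcal{A}|=u(n,k)$, and there is a vertex which is the centre of at least one star in $\mathcal{A}$ and is not a leaf of any star in $\mathcal{A}$; otherwise it is non-reducible. *)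

From mathcomp Require Import all_boot all_order all_algebra.
Set Implicit Arguments. Unset Strict Implicit. Unset Printing Implicit Defensive.

(* Vertices: an arbitrary finite type T (so the order is n = #|T|).
   A k-star is represented by a pair (c, L) : centre c and leaf set L,
   with #|L| = k and c \notin L. *)

Definition star (T : finType) := (T * {set T})%type.

Definition centre (T : finType) (s : star T) : T := s.1.
Definition leaves (T : finType) (s : star T) : {set T} := s.2.

Definition is_kstar (T : finType) (k : nat) (s : star T) : bool :=
  (#|leaves s| == k) && (centre s \notin leaves s).

Definition star_edges (T : finType) (s : star T) : {set {set T}} :=
  [set [set centre s; l] | l in leaves s].

Definition partial_star_design (T : finType) (k : nat) (A : {set star T}) : Prop :=
  (forall s, s \in A -> is_kstar k s) /\
  (forall s t, s \in A -> t \in A -> s != t ->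
     [disjoint star_edges s & star_edges t]).

Definition completable (T : finType) (k : nat) (A : {set star T}) : Prop :=
  exists B : {set star T},
    A \subset B /\ partial_star_design k B /\
    (forall x y : T, x != y -> exists2 s, s \in B & [set x; y] \in star_edges s).

Definition u (n k : nat) : int :=
  if n %% k != 1 %% k then (Posz (2 * ((n - 2) %/ k)) - 1)%R
  else (Posz (2 * (n - 1) %/ k) - 2)%R.

Definition reducible (T : finType) (k : nat) (A : {set star T}) : Prop :=
  [/\ #|T| = 1 %[mod k], Posz #|A| = u #|T| k &
      exists v : T, (exists2 s, s \in A & centre s = v) /\
                    (forall s, s \in A -> v \notin leaves s)].

From mathcomp Require Import all_boot all_order all_algebra.
From mathcomp Require Import zify.
Set Implicit Arguments. Unset Strict Implicit. Unset Printing Implicit Defensive.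

(* Let L be the graph of the edges of K_T not covered by A.  If L has an orientation in
   which every out-degree is a multiple k * b(x), the out-neighbourhood of each vertex x
   splits into b(x) sets of size k, i.e. into new stars centred at x, and these complete A.
   By Hakimi's theorem, an orientation with out-degrees o exists as soon as the o(x) sum to
   the number of edges of L and every vertex set S spans at most o(S) edges of L.
   Non-reducibility makes every centre a leaf, so at most one vertex z has A-degree above
   (3k+1)/2; taking o(z) = 0, o = 2k on a set X of (3k-5)/2 vertices of A-degree at most
   (k+1)/2, and o = k elsewhere, the spanning condition follows from the degree bounds of L. *)

Lemma set2_eq (T : finType) (a b c d : T) : [set a; b] = [set c; d] ->
  (a = c /\ b = d) \/ (a = d /\ b = c).
Proof.
move=> e.
have /set2P ha : a \in [set c; d] by rewrite -e set21.
have /set2P hb : b \in [set c; d] by rewrite -e set22.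
have /set2P hc : c \in [set a; b] by rewrite e set21.
have /set2P hd : d \in [set a; b] by rewrite e set22.
by case: ha hb hc hd => -> [] -> [] ? [] ?; subst; tauto.
Qed.

Lemma set2_inj (T : finType) (x : T) : injective (fun y => [set x; y]).
Proof. by move=> y y' /set2_eq[[_ ->] | [-> <-]]. Qed.

Lemma cards_in_sum (I : finType) (A : {pred I}) (P : pred I) :
  #|[set i in A | P i]| = \sum_(i in A) P i.
Proof.
rewrite -sum1_card big_mkcond [RHS]big_mkcond; apply: eq_bigr => i _.
by rewrite inE; case: (i \in A); case: (P i).
Qed.

Lemma card_sumE (I : finType) (A : {pred I}) : #|A| = \sum_i (i \in A).
Proof.
rewrite -sum1_card big_mkcond; apply: eq_bigr => i _.
by case: (i \in A).
Qed.

Lemma card_bigcup_disjoint (I T : finType) (P : pred I) (F : I -> {set T}) :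
    {in P &, forall i j, i != j -> [disjoint F i & F j]} ->
  #|\bigcup_(i | P i) F i| = \sum_(i | P i) #|F i|.
Proof.
move=> disF; pose G i := if P i then F i else set0.
have -> : \bigcup_(i | P i) F i = \bigcup_i G i by rewrite big_mkcond.
rewrite -sum1_card partition_disjoint_bigcup => [|i j nij]; last first.
  rewrite /G; case Pi: (P i); case Pj: (P j); rewrite -setI_eq0 ?setI0 ?set0I ?eqxx //.
  by rewrite setI_eq0; apply: disF; rewrite ?Pi ?Pj.
rewrite [RHS]big_mkcond; apply: eq_bigr => i _; rewrite /G sum1_card.
by case: (P i); rewrite ?cards0.
Qed.

Lemma card_pairs_incident (T : finType) (x : T) :
  #|[set e : {set T} | (#|e| == 2) && (x \in e)]| = #|T|.-1.
Proof.
rewrite -(cardsC1 x) -(card_imset _ (@set2_inj T x)); apply: eq_card => e; rewrite !inE.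
apply/andP/imsetP => [[/cards2P[a [b [nab ->]]] /set2P[] ->] | [y ny ->]].
- by exists b; rewrite // !inE eq_sym.
- by exists a; rewrite 1?setUC // !inE.
by rewrite cards2 set21; move: ny; rewrite !inE eq_sym => ->.
Qed.

Lemma exists_subset_card (T : finType) (N : {set T}) j : j <= #|N| ->
  exists2 K : {set T}, K \subset N & #|K| = j.
Proof.
rewrite -bin_gt0 -cards_draws => /card_gt0P[K]; rewrite inE => /andP[KN /eqP cK].
by exists K.
Qed.

Lemma uniform_partition_exists (T : finType) (N : {set T}) k m : 0 < k -> #|N| = k * m ->
  exists2 P : {set {set T}}, partition P N & {in P, forall K : {set T}, #|K| = k}.
Proof.
move=> k_gt0; elim: m N => [|m IH] N cN.
  have -> : N = set0 by apply/cards0_eq; rewrite cN muln0.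
  by exists set0; rewrite ?partition_set0 // => K; rewrite inE.
have [K KN cK] : exists2 K : {set T}, K \subset N & #|K| = k.
  by apply: exists_subset_card; rewrite cN mulnS leq_addr.
have [P partP cP] : exists2 P : {set {set T}},
    partition P (N :\: K) & {in P, forall K : {set T}, #|K| = k}.
  by apply: IH; rewrite cardsD (setIidPr KN) cN cK mulnS addKn.
exists (K |: P); last by move=> K'; rewrite in_setU1 => /predU1P[->|/cP].
have -> : N = K :|: (N :\: K).
  by apply/setP => x; rewrite !inE; case: (boolP (x \in K)) => // /(subsetP KN).
apply: partitionU1 => //; first by rewrite -card_gt0 cK.
by rewrite -setI_eq0; apply/eqP/setP => x; rewrite !inE; case: (x \in K); rewrite ?andbF.
Qed.

Section Orientation.
Variable T : finType.
Implicit Types (E : {set {set T}}) (S : {set T}) (o : T -> nat) (D : rel T).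

Definition induced E S := [set e in E | e \subset S].

Definition orients E o D :=
  [/\ forall x y, D x y -> [set x; y] \in E,
      forall x y, [set x; y] \in E -> D x y || D y x,
      forall x y, D x y -> ~~ D y x &
      forall x, #|[set y | D x y]| = o x].

Lemma sum_setUI o S1 S2 :
  \sum_(x in S1 :|: S2) o x + \sum_(x in S1 :&: S2) o x =
  \sum_(x in S1) o x + \sum_(x in S2) o x.
Proof.
rewrite !(big_mkcond (fun x => x \in _)) -!big_split; apply: eq_bigr => x _ /=.
by rewrite !inE; case: (x \in S1); case: (x \in S2); rewrite ?addn0 ?add0n // addnC.
Qed.

Lemma induced_setI E S1 S2 : induced E (S1 :&: S2) = induced E S1 :&: induced E S2.
Proof. by apply/setP => e; rewrite !inE subsetI; case: (e \in E). Qed.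

Lemma induced_submod E S1 S2 e : e \in E -> e \subset S1 :|: S2 ->
    ~~ (e \subset S1) -> ~~ (e \subset S2) ->
  #|induced E S1| + #|induced E S2| < #|induced E (S1 :|: S2)| + #|induced E (S1 :&: S2)|.
Proof.
move=> eE eS eS1 eS2; rewrite -cardsUI induced_setI ltn_add2r.
apply/proper_card/properP; split.
  apply/subsetP => f /setUP[] /setIdP[fE fS]; rewrite inE fE.
    by rewrite (subset_trans fS) ?subsetUl.
  by rewrite (subset_trans fS) ?subsetUr.
by exists e; rewrite !inE ?eE ?eS // (negbTE eS1) (negbTE eS2).
Qed.

Lemma no_crossing_tight_sets E o u v S1 S2 :
    (forall S, #|induced E S| <= \sum_(x in S) o x) -> [set u; v] \in E ->
    u \in S1 -> v \notin S1 -> v \in S2 -> u \notin S2 ->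
    \sum_(x in S1) o x <= #|induced E S1| -> \sum_(x in S2) o x <= #|induced E S2| ->
  False.
Proof.
move=> hS uvE uS1 vS1 vS2 uS2 tight1 tight2.
have uvS : [set u; v] \subset S1 :|: S2 by rewrite subUset !sub1set !inE uS1 vS2 orbT.
have uvS1 : ~~ ([set u; v] \subset S1) by apply: contra vS1 => /subsetP; apply; apply: set22.
have uvS2 : ~~ ([set u; v] \subset S2) by apply: contra uS2 => /subsetP; apply; apply: set21.
have := induced_submod uvE uvS uvS1 uvS2.
have := hS (S1 :|: S2); have := hS (S1 :&: S2); have := sum_setUI o S1 S2.
lia.
Qed.

Lemma sum_subn_pred1 o u (P : pred T) : 0 < o u ->
  \sum_(x | P x) (o x - (x == u)) = \sum_(x | P x) o x - P u.
Proof.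
move=> ou; have [Pu | nPu] := boolP (P u); last first.
  rewrite subn0; apply: eq_bigr => x Px.
  by rewrite (_ : x == u = false) ?subn0 //; apply: contraNF nPu => /eqP <-.
rewrite !(bigD1 u Pu) /= eqxx.
rewrite (eq_bigr o) => [|x /andP[_ /negbTE ->]]; last by rewrite subn0.
by move: ou; rewrite /=; lia.
Qed.

Lemma induced_setD1 E e S : #|induced (E :\ e) S| = #|induced E S| - (e \in induced E S).
Proof.
rewrite (cardsD1 e (induced E S)) addKn.
by apply: eq_card => f; rewrite !inE andbA.
Qed.

Lemma orients_add_arc E o u v D : u != v -> [set u; v] \in E -> 0 < o u ->
    orients (E :\ [set u; v]) (fun x => o x - (x == u)) D ->
  orients E o (fun x y => D x y || (x == u) && (y == v)).
Proof.
move=> nuv uvE ou [D_E D_cover D_asym D_deg].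
have nDuv : ~~ D u v by apply/negP => /D_E; rewrite !inE eqxx.
have nDvu : ~~ D v u by apply/negP => /D_E; rewrite setUC !inE eqxx.
split=> [x y | x y xyE | x y | x] /=.
- by case/orP=> [/D_E /setD1P[] // | /andP[/eqP-> /eqP->]].
- have [exy | nexy] := eqVneq [set x; y] [set u; v]; last first.
    by have /orP[-> | ->] := D_cover x y ltac:(by rewrite !inE nexy); rewrite ?orbT.
  by case: (set2_eq exy) => -[-> ->]; rewrite !eqxx ?orbT.
- case/orP=> [Dxy | /andP[/eqP-> /eqP->]]; last by rewrite (negbTE nDvu) eq_sym (negbTE nuv).
  rewrite negb_or D_asym //=; apply: contraTN Dxy => /andP[/eqP-> /eqP->]; exact: nDvu.
- have [-> | nxu] := eqVneq x u; last first.
    have := D_deg x; rewrite (negbTE nxu) subn0 => <-.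
    by apply: eq_card => y; rewrite !inE orbF.
  have -> : [set y | D u y || true && (y == v)] = v |: [set y | D u y].
    by apply/setP => y; rewrite !inE orbC.
  by rewrite cardsU1 inE (negbTE nDuv) D_deg eqxx add1n subn1 prednK.
Qed.

Theorem orientation_exists E o : (forall e, e \in E -> #|e| = 2) -> \sum_x o x = #|E| ->
    (forall S, #|induced E S| <= \sum_(x in S) o x) ->
  exists D, orients E o D.
Proof.
move Dn: #|E| => n; elim: n E o Dn => [|n IH] E o cardE E2 sumo hS.
  have o0 x : o x = 0 by apply/eqP; rewrite -leqn0 -sumo (bigD1 x) // leq_addr.
  have -> : E = set0 by apply/eqP; rewrite -cards_eq0 cardE.
  exists (fun _ _ => false); split=> // [x y | x]; first by rewrite inE.
  by rewrite o0; apply: eq_card0 => y; rewrite inE.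
have [e eE] : exists e, e \in E by apply/card_gt0P; rewrite cardE.
have /cards2P[u [v [nuv euv]]] : #|e| == 2 by rewrite E2.
subst e.
(* By submodularity, tight sets (spanning exactly o(S) edges) cannot separate u from v
   in both directions; orient uv away from an endpoint that no tight set separates. *)
wlog sepS : u v nuv eE / forall S, u \in S -> v \notin S -> #|induced E S| < \sum_(x in S) o x.
  move=> wlog_sep.
  have [/existsP[S1 /and3P[uS1 vS1 tight1]] | /existsPn loose] :=
    boolP [exists S : {set T}, [&& u \in S, v \notin S & \sum_(x in S) o x <= #|induced E S|]].
    apply: (wlog_sep v u); rewrite 1?eq_sym 1?setUC // => S2 vS2 uS2; rewrite ltnNge.
    by apply/negP => tight2; apply: (no_crossing_tight_sets hS eE uS1 vS1 vS2 uS2).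
  by apply: (wlog_sep u v) => // S uS vS; have := loose S; rewrite uS vS ltnNge.
have ou : 0 < o u.
  have vu : v \notin [set u] by rewrite inE eq_sym.
  by have := sepS _ (set11 u) vu; rewrite big_set1; apply: leq_ltn_trans.
have [D orD] : exists D, orients (E :\ [set u; v]) (fun x => o x - (x == u)) D.
  apply: IH => [|e /setD1P[_ /E2] //||S].
  - by move: cardE; rewrite (cardsD1 [set u; v]) eE add1n => -[].
  - by rewrite sum_subn_pred1 // sumo subn1.
  rewrite sum_subn_pred1 // induced_setD1 inE eE /= subUset !sub1set.
  have := hS S; have := sepS S.
  by case: (u \in S); case: (v \in S) => /=; lia.
by exists (fun x y => D x y || (x == u) && (y == v)); apply: orients_add_arc.
Qed.

End Orientation.

Section Degrees.
Variable T : finType.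
Implicit Types (E : {set {set T}}) (S W : {set T}) (o : T -> nat).

Definition deg E x := #|[set e in E | x \in e]|.

Lemma sum_deg E W : \sum_(x in W) deg E x = \sum_(e in E) #|e :&: W|.
Proof.
rewrite (eq_bigr _ (fun x _ => cards_in_sum E (fun e => x \in e))) exchange_big.
by apply: eq_bigr => e _; rewrite -cards_in_sum; apply: eq_card => x; rewrite !inE andbC.
Qed.

Lemma card_setI_le2 (e W : {set T}) : #|e| = 2 ->
  #|e :&: W| <= (e :&: W != set0) + (e \subset W).
Proof.
move=> e2; have [eW | neW] := boolP (e \subset W).
  by rewrite (setIidPl eW) e2 -card_gt0 e2.
have : #|e :&: W| < 2.
  rewrite -e2 proper_card // properEneq subsetIl andbT.
  by apply: contraNneq neW => <-; apply: subsetIr.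
by case: eqP => [->|_]; rewrite ?cards0 //=; lia.
Qed.

Section Graph.
Variable E : {set {set T}}.
Hypothesis E2 : forall e, e \in E -> #|e| = 2.

Lemma card_induced_bin2 S : #|induced E S| <= 'C(#|S|, 2).
Proof.
rewrite -cards_draws; apply/subset_leq_card/subsetP => e.
by rewrite !inE => /andP[/E2 -> ->].
Qed.

Lemma sum_deg_le W : \sum_(x in W) deg E x <= #|E :\: induced E (~: W)| + #|induced E W|.
Proof.
have -> : E :\: induced E (~: W) = [set e in E | e :&: W != set0].
  by apply/setP => e; rewrite !inE setI_eq0 disjoints_subset; case: (e \in E); rewrite ?andbT.
rewrite (sum_deg E W) !cards_in_sum -big_split /=; apply: leq_sum => e eE.
exact/card_setI_le2/E2.
Qed.

Lemma sum_deg_card2 : \sum_x deg E x = 2 * #|E|.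
Proof.
transitivity (\sum_(x in [set: T]) deg E x); first by apply: eq_bigl => x; rewrite inE.
rewrite sum_deg mulnC -sum_nat_const; apply: eq_bigr => e eE.
by rewrite setIT E2.
Qed.

Variables (o : T -> nat) (z : T) (k : nat).

Lemma sum_ge_except S : (forall x, x != z -> k <= o x) -> k * (#|S| - 1) <= \sum_(x in S) o x.
Proof.
move=> ok; apply: (@leq_trans (\sum_(x in S) k * (x != z))).
  rewrite -big_distrr /= -cards_in_sum leq_mul2l; apply/orP; right.
  have -> : [set x in S | x != z] = S :\ z by apply/setP => x; rewrite !inE andbC.
  by rewrite (cardsD1 z S); case: (z \in S) => /=; lia.
by apply: leq_sum => x _; case: eqP => [->|/eqP/ok]; rewrite ?muln0 ?muln1.
Qed.

Lemma card_induced_le_small S : #|S| <= 2 * k -> (forall x, x != z -> k <= o x) ->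
  #|induced E S| <= \sum_(x in S) o x.
Proof.
move=> cS ok; have := card_induced_bin2 S; have := sum_ge_except S ok; rewrite bin2.
have : #|S| * #|S|.-1 <= 2 * k * #|S|.-1 by rewrite leq_mul2r cS orbT.
lia.
Qed.

Lemma card_induced_le_large S : #|~: S| <= k -> \sum_x o x = #|E| -> o z = 0 ->
    (forall x, x != z -> 2 * o x + (k - 1) <= 2 * deg E x) ->
  #|induced E S| <= \sum_(x in S) o x.
Proof.
move=> cU sumo oz odeg; set W := ~: S :\ z.
have cW : #|W| <= k by apply: leq_trans cU; apply/subset_leq_card/subsetDl.
have sum_split : \sum_x o x = \sum_(x in S) o x + \sum_(x in W) o x.
  rewrite (bigID (mem S)) /=; congr (_ + _).
  rewrite (bigID (pred1 z)) /= big1 ?add0n => [|x /andP[_ /eqP->] //].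
  by apply: eq_bigl => x; rewrite !inE andbC.
have card_split : #|induced E S| + #|E :\: induced E (~: W)| <= #|E|.
  have sub_ind : induced E S \subset E by apply/subsetP => e /setIdP[].
  rewrite -(cardsID (induced E S) E) (setIidPr sub_ind) leq_add2l.
  apply/subset_leq_card/setDS/subsetP => e /setIdP[eE eS]; rewrite inE eE.
  by apply: subset_trans eS _; apply/subsetP => x xS; rewrite !inE xS andbF.
have deg_sum : 2 * \sum_(x in W) o x + #|W| * (k - 1) <= 2 * \sum_(x in W) deg E x.
  rewrite !big_distrr -sum_nat_const -big_split /=; apply: leq_sum => x.
  by rewrite !inE => /andP[nxz _]; apply: odeg.
have := sum_deg_le W; have := card_induced_bin2 W; rewrite bin2.
have : #|W| * #|W|.-1 <= #|W| * (k - 1) by rewrite leq_mul2l; lia.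
lia.
Qed.

Lemma card_induced_le_sum : #|T| <= 3 * k + 1 -> \sum_x o x = #|E| -> o z = 0 ->
    (forall x, x != z -> k <= o x) ->
    (forall x, x != z -> 2 * o x + (k - 1) <= 2 * deg E x) ->
  forall S, #|induced E S| <= \sum_(x in S) o x.
Proof.
move=> cT sumo oz ok odeg S; have [small | large] := leqP #|S| (2 * k).
  exact: card_induced_le_small.
by apply: card_induced_le_large => //; move: (cardsC S); lia.
Qed.

End Graph.
End Degrees.

Lemma mem_star_edges (T : finType) (s : star T) x y :
  ([set x; y] \in star_edges s) =
  ((x == centre s) && (y \in leaves s)) || ((y == centre s) && (x \in leaves s)).
Proof.
apply/imsetP/orP => [[l lL /set2_eq[[-> ->] | [-> ->]]] | [] /andP[/eqP-> yL]].
- by left; rewrite eqxx.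
- by right; rewrite eqxx.
- by exists y.
- by exists x; rewrite // setUC.
Qed.

Lemma card_star_edges (T : finType) (s : star T) : #|star_edges s| = #|leaves s|.
Proof. exact/card_imset/set2_inj. Qed.

Lemma card_star_edge (T : finType) (s : star T) e :
  centre s \notin leaves s -> e \in star_edges s -> #|e| = 2.
Proof.
by move=> cL /imsetP[l lL ->]; rewrite cards2; case: eqP cL => // ->; rewrite lL.
Qed.

Lemma card_star_edges_incident (T : finType) (s : star T) x :
    centre s \notin leaves s ->
  #|[set e in star_edges s | x \in e]| = (centre s == x) * #|leaves s| + (x \in leaves s).
Proof.
move=> cL; set c := centre s; set L := leaves s.
have -> : [set e in star_edges s | x \in e] =
    [set [set c; l] | l in [set l in L | x \in [set c; l]]].
  apply/setP => e; apply/setIdP/imsetP => [[/imsetP[l lL ->] xe] | [l /setIdP[lL xe] ->]].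
    by exists l => //; rewrite inE lL.
  by split=> //; apply: imset_f.
rewrite card_imset; last exact: set2_inj.
have [<- | nxc] := eqVneq c x.
  by rewrite (negbTE cL) mul1n addn0; apply: eq_card => l; rewrite !inE eqxx andbT.
rewrite mul0n add0n; case: (boolP (x \in L)) => [xL | nxL].
  have -> : [set l in L | x \in [set c; l]] = [set x]; last by rewrite cards1.
  apply/setP => l; rewrite !inE eq_sym (negbTE nxc) /= eq_sym.
  by case: eqP => [->|]; rewrite ?xL ?andbF.
apply: eq_card0 => l; rewrite !inE eq_sym (negbTE nxc) /=.
by apply: contraNF nxL => /andP[lL /eqP->].
Qed.

Section StarDesign.
Variables (k : nat) (T : finType) (A : {set star T}).
Hypothesis hA : partial_star_design k A.

Definition design_edges := \bigcup_(s in A) star_edges s.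

Definition leave := [set e : {set T} | (#|e| == 2) && (e \notin design_edges)].

Definition centre_count x := #|[set s in A | centre s == x]|.

Definition leaf_count x := #|[set s in A | x \in leaves s]|.

Lemma design_kstar s : s \in A -> is_kstar k s.
Proof. by case: hA => kA _; apply: kA. Qed.

Lemma card_leaves s : s \in A -> #|leaves s| = k.
Proof. by move/design_kstar => /andP[/eqP]. Qed.

Lemma centre_notin_leaves s : s \in A -> centre s \notin leaves s.
Proof. by move/design_kstar => /andP[]. Qed.

Lemma star_edges_inj s t e : s \in A -> t \in A ->
  e \in star_edges s -> e \in star_edges t -> s = t.
Proof.
move=> sA tA es et; apply/eqP/negPn/negP => nst.
by case: hA => _ /(_ s t sA tA nst) /disjointFr /(_ es); rewrite et.
Qed.

Lemma card_design_edge e : e \in design_edges -> #|e| = 2.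
Proof. by move=> /bigcupP[s sA]; apply/card_star_edge/centre_notin_leaves. Qed.

Lemma card_design_edges : #|design_edges| = k * #|A|.
Proof.
rewrite card_bigcup_disjoint => [|s t sA tA nst].
  by rewrite mulnC -sum_nat_const; apply: eq_bigr => s sA; rewrite card_star_edges card_leaves.
by case: hA => _; apply.
Qed.

Lemma deg_design_edges x : deg design_edges x = k * centre_count x + leaf_count x.
Proof.
rewrite /deg; have -> : [set e in design_edges | x \in e] =
    \bigcup_(s in A) [set e in star_edges s | x \in e].
  apply/setP => e; rewrite inE; apply/andP/bigcupP => [[/bigcupP[s sA es] xe] | [s sA]].
    by exists s; rewrite ?inE ?es.
  by rewrite inE => /andP[es ->]; split=> //; apply/bigcupP; exists s.
rewrite card_bigcup_disjoint => [|s t sA tA nst]; last first.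
  have sub u : [set e in star_edges u | x \in e] \subset star_edges u.
    by apply/subsetP => e /setIdP[].
  by case: hA => _ /(_ s t sA tA nst) dst; apply: disjointWl (sub s) (disjointWr (sub t) dst).
rewrite (eq_bigr _ (fun s sA => card_star_edges_incident x (centre_notin_leaves sA))).
rewrite (eq_bigr (fun s => (centre s == x) * k + (x \in leaves s))) => [|s sA].
  by rewrite big_split -big_distrl /= mulnC /centre_count /leaf_count !cards_in_sum.
by rewrite card_leaves.
Qed.

Lemma deg_leave x : deg leave x + deg design_edges x = #|T|.-1.
Proof.
rewrite -(card_pairs_incident x) -cardsUI.
have -> : [set e in leave | x \in e] :&: [set e in design_edges | x \in e] = set0.
  by apply/setP => e; rewrite !inE; case: (e \in design_edges); rewrite ?andbF.
rewrite cards0 addn0; apply: eq_card => e; rewrite !inE.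
case eA: (e \in design_edges); rewrite /= ?andbT ?andbF ?orbF //.
by rewrite card_design_edge // eqxx.
Qed.

Lemma card_leave : #|leave| = 'C(#|T|, 2) - k * #|A|.
Proof.
have sub2 : design_edges \subset [set e : {set T} | #|e| == 2].
  by apply/subsetP => e /card_design_edge; rewrite inE => ->.
rewrite -card_design_edges -card_draws -(setIidPr sub2) -cardsD.
by apply: eq_card => e; rewrite !inE andbC.
Qed.

Lemma card_stars_at x :
  #|[set s in A | (centre s == x) || (x \in leaves s)]| = centre_count x + leaf_count x.
Proof.
rewrite /centre_count /leaf_count -cardsUI.
have -> : [set s in A | centre s == x] :&: [set s in A | x \in leaves s] = set0.
  apply/setP => s; rewrite !inE; apply/negbTE/negP => /andP[/andP[sA /eqP cs] /andP[_ xL]].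
  by move: (centre_notin_leaves sA); rewrite cs xL.
by rewrite cards0 addn0; apply: eq_card => s; rewrite !inE andb_orr.
Qed.

Lemma design_deg_le x : k * centre_count x + leaf_count x <= #|T|.-1.
Proof. by rewrite -(deg_leave x) deg_design_edges leq_addl. Qed.

Lemma sum_design_deg : \sum_x (k * centre_count x + leaf_count x) = 2 * (k * #|A|).
Proof.
rewrite -(eq_bigr _ (fun x _ => deg_design_edges x)) -card_design_edges.
exact/sum_deg_card2/card_design_edge.
Qed.

Lemma stars_at_le x : centre_count x + leaf_count x <= #|A|.
Proof. by rewrite -card_stars_at subset_leq_card //; apply/subsetP => s /setIdP[]. Qed.

Lemma stars_at_all x : centre_count x + leaf_count x = #|A| ->
  forall s, s \in A -> centre s = x \/ x \in leaves s.
Proof.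
move=> full s sA; set At := [set s in A | (centre s == x) || (x \in leaves s)].
have /eqP eqA : At == A.
  by rewrite eqEcard card_stars_at full leqnn andbT; apply/subsetP => t /setIdP[].
have : s \in At by rewrite eqA.
by rewrite inE sA => /orP[/eqP|]; [left | right].
Qed.

Lemma centred_star x : 0 < centre_count x -> exists2 s, s \in A & centre s = x.
Proof. by case/card_gt0P => s /setIdP[sA /eqP]; exists s. Qed.

Lemma leaf_star x : 0 < leaf_count x -> exists2 s, s \in A & x \in leaves s.
Proof. by case/card_gt0P => s /setIdP[sA]; exists s. Qed.

Lemma centred_leaf_inj s t x : s \in A -> t \in A -> centre s = centre t ->
  x \in leaves s -> x \in leaves t -> s = t.
Proof.
move=> sA tA cst xs xt; apply: (star_edges_inj sA tA (e := [set centre s; x])).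
  by rewrite mem_star_edges eqxx xs.
by rewrite mem_star_edges cst eqxx xt.
Qed.

Lemma no_mutual_leaves s t : s \in A -> t \in A ->
  centre t \in leaves s -> centre s \in leaves t -> False.
Proof.
move=> sA tA ts st.
have est : s = t.
  apply: (star_edges_inj sA tA (e := [set centre s; centre t])).
    by rewrite mem_star_edges eqxx ts.
  by rewrite mem_star_edges eqxx st orbT.
by move: (centre_notin_leaves sA); rewrite {2}est st.
Qed.

Section Completion.
Variables (b : T -> nat) (D : rel T) (P : T -> {set {set T}}).
Hypotheses (orD : orients leave (fun x => k * b x) D)
  (partP : forall x, partition (P x) [set y | D x y])
  (cardP : forall x, {in P x, forall K : {set T}, #|K| = k}).

Definition completion := [set s : star T | (s \in A) || (leaves s \in P (centre s))].

Lemma new_star_arc s y : leaves s \in P (centre s) -> y \in leaves s -> D (centre s) y.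
Proof. by move=> sP yL; have := subsetP (partitionS (partP _) sP) y yL; rewrite inE. Qed.

Lemma new_star_edge s e : leaves s \in P (centre s) -> e \in star_edges s -> e \in leave.
Proof. by case: orD => D_E _ _ _ sP /imsetP[l lL ->]; apply/D_E/new_star_arc. Qed.

Lemma new_star_edges_inj s t e : leaves s \in P (centre s) -> leaves t \in P (centre t) ->
  e \in star_edges s -> e \in star_edges t -> s = t.
Proof.
move=> sP tP /imsetP[l lL ->] /imsetP[l' l'L /set2_eq[[cst ll'] | [cl' lct]]].
  rewrite -cst in tP; rewrite -ll' in l'L.
  have /trivIsetP ti := partition_trivIset (partP (centre s)).
  case: (eqVneq (leaves s) (leaves t)) => [eL | /(ti _ _ sP tP) /disjointFr /(_ lL)].
    exact: injective_projections.
  by rewrite l'L.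
case: orD => _ _ D_asym _; have := new_star_arc sP lL; rewrite lct => /D_asym.
by rewrite cl' (new_star_arc tP l'L).
Qed.

Lemma completion_kstar s : s \in completion -> is_kstar k s.
Proof.
rewrite inE => /orP[/design_kstar // | sP]; rewrite /is_kstar (cardP sP) eqxx /=.
apply/negP => /(new_star_arc sP); case: orD => D_E _ _ _ /D_E.
by rewrite inE setUid cards1.
Qed.

Lemma completion_disjoint s t : s \in completion -> t \in completion -> s != t ->
  [disjoint star_edges s & star_edges t].
Proof.
have design_edge u e : u \in A -> e \in star_edges u -> e \notin leave.
  by move=> uA eu; rewrite inE negb_and negbK; apply/orP; right; apply/bigcupP; exists u.
rewrite !inE => hs ht nst; rewrite -setI_eq0; apply/eqP/setP => e; rewrite !inE.
apply/negbTE/negP => /andP[es et]; move: nst; rewrite eq_sym.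
case/orP: hs => [sA | sP]; case/orP: ht => [tA | tP].
- by rewrite (star_edges_inj sA tA es et) eqxx.
- by have := design_edge _ _ sA es; rewrite (new_star_edge tP et).
- by have := design_edge _ _ tA et; rewrite (new_star_edge sP es).
- by rewrite (new_star_edges_inj sP tP es et) eqxx.
Qed.

Lemma completion_covers_arc x y : D x y ->
  exists2 s, s \in completion & [set x; y] \in star_edges s.
Proof.
move=> Dxy; have : y \in cover (P x) by rewrite (cover_partition (partP x)) inE.
case/bigcupP => K KP yK; exists (x, K); first by rewrite inE KP orbT.
by rewrite mem_star_edges eqxx yK.
Qed.

End Completion.

Lemma completable_of_orientation b D : 0 < k -> orients leave (fun x => k * b x) D ->
  completable k A.
Proof.
move=> k_gt0 orD; case: (orD) => _ D_cover _ D_deg.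
have [P partP cardP] := fin_all_exists2 (fun x => uniform_partition_exists k_gt0 (D_deg x)).
exists (completion P); split; [|split; [split|]].
- by apply/subsetP => s sA; rewrite inE sA.
- by move=> s /(completion_kstar orD partP cardP).
- exact: completion_disjoint orD partP.
move=> x y nxy; case: (boolP ([set x; y] \in design_edges)) => [/bigcupP[s sA es] | ndxy].
  by exists s; rewrite // inE sA.
have /D_cover /orP[Dxy | Dyx] : [set x; y] \in leave by rewrite inE cards2 nxy ndxy.
  exact: (completion_covers_arc partP Dxy).
by rewrite setUC; apply: (completion_covers_arc partP Dyx).
Qed.

End StarDesign.

Section FourStars.
Variables (k : nat) (T : finType) (A : {set star T}).
Hypotheses (k_ge3 : 3 <= k) (k_odd : odd k) (cardT : #|T| = 3 * k + 1)
  (hA : partial_star_design k A) (cardA : #|A| = 4) (nred : ~ reducible k A).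

Local Notation ca := (centre_count A).
Local Notation cl := (leaf_count A).

(* As |A| = u(3k + 1, k), non-reducibility says exactly that every centre is also a leaf. *)
Lemma centre_is_leaf x : 0 < ca x -> 0 < cl x.
Proof.
case/card_gt0P => s; rewrite inE => /andP[sA /eqP cs].
rewrite lt0n; apply: contra_notN nred => /eqP/cards0_eq cl0; split.
- by rewrite cardT modnMDl.
- by rewrite cardA /u cardT modnMDl eqxx /= addnK mulnA mulnK //; lia.
exists x; split; first by exists s.
by move=> t tA; apply/negP => xt; have := in_set0 t; rewrite -cl0 inE tA xt.
Qed.

Definition heavy x := 3 * k + 2 <= 2 * (k * ca x + cl x).

Lemma heavy_cases x : heavy x -> ca x = 2 \/ ca x = 1 /\ cl x = 3.
Proof.
have := stars_at_le hA x; have := design_deg_le hA x; have := @centre_is_leaf x.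
by rewrite /heavy cardA cardT; case: (ca x) => [|[|[|[|[|a]]]]] /=; lia.
Qed.

Lemma no_two_double_centres x w : x != w -> ca x = 2 -> ca w = 2 -> False.
Proof.
move=> nxw cx cw; set Cx := [set s in A | centre s == x]; set Cw := [set s in A | centre s == w].
have centre_xw s : s \in A -> centre s = x \/ centre s = w.
  have disj : Cx :&: Cw = set0.
    apply/setP => t; rewrite !inE; apply/negbTE/negP => /andP[/andP[_ /eqP->]].
    by rewrite (negbTE nxw) andbF.
  have /eqP eqA : Cx :|: Cw == A.
    have := cardsUI Cx Cw; rewrite disj cards0 addn0 -/(ca x) -/(ca w) cx cw.
    rewrite eqEcard cardA => ->; rewrite leqnn andbT.
    by apply/subsetP => t /setUP[] /setIdP[].
  by rewrite -eqA !inE => /orP[] /andP[_ /eqP]; [left | right].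
have [s sA xs] := leaf_star (centre_is_leaf (ltac:(by rewrite cx) : 0 < ca x)).
have [t tA wt] := leaf_star (centre_is_leaf (ltac:(by rewrite cw) : 0 < ca w)).
have cs : centre s = w.
  by case: (centre_xw s sA) => // csx; move: (centre_notin_leaves hA sA); rewrite csx xs.
have ct : centre t = x.
  by case: (centre_xw t tA) => // ctw; move: (centre_notin_leaves hA tA); rewrite ctw wt.
by apply: (no_mutual_leaves hA sA tA); rewrite ?ct ?cs.
Qed.

Lemma no_heavy_besides_full x w : x != w -> ca x = 1 -> cl x = 3 -> heavy w -> False.
Proof.
move=> nxw cx lx hw.
have at_x := stars_at_all hA (ltac:(by rewrite cx lx cardA) : ca x + cl x = #|A|).
have leaf_x t : t \in A -> centre t = w -> x \in leaves t.
  by move=> tA ctw; case: (at_x t tA) => // ctx; move: nxw; rewrite -ctx ctw eqxx.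
case: (heavy_cases hw) => [cw | [cw lw]].
  have /cards2P[t1 [t2 [nt12 eqC]]] : #|[set s in A | centre s == w]| == 2.
    by rewrite -/(ca w) cw.
  have /setIdP[t1A /eqP ct1] : t1 \in [set s in A | centre s == w] by rewrite eqC set21.
  have /setIdP[t2A /eqP ct2] : t2 \in [set s in A | centre s == w] by rewrite eqC set22.
  move: nt12; rewrite (centred_leaf_inj hA t1A t2A _ (leaf_x _ t1A ct1) (leaf_x _ t2A ct2)).
    by rewrite eqxx.
  by rewrite ct1 ct2.
have at_w := stars_at_all hA (ltac:(by rewrite cw lw cardA) : ca w + cl w = #|A|).
have [s sA cs] := centred_star (ltac:(by rewrite cx) : 0 < ca x).
have [t tA ct] := centred_star (ltac:(by rewrite -/(ca w) cw) : 0 < ca w).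
apply: (no_mutual_leaves hA sA tA); rewrite ?cs ?ct; last exact: leaf_x.
by case: (at_w s sA) => // csw; move: nxw; rewrite -cs csw eqxx.
Qed.

Lemma heavy_unique x w : heavy x -> heavy w -> x = w.
Proof.
move=> hx hw; apply/eqP/negPn/negP => nxw.
case: (heavy_cases hx) => [cx | [cx lx]]; last exact: (no_heavy_besides_full nxw cx lx hw).
case: (heavy_cases hw) => [cw | [cw lw]]; first exact: (no_two_double_centres nxw cx cw).
by apply: (no_heavy_besides_full _ cw lw hx); rewrite eq_sym.
Qed.

Lemma exists_peak : exists z, k + 1 <= k * ca z + cl z /\
  forall x, x != z -> 2 * (k * ca x + cl x) <= 3 * k + 1.
Proof.
have [s0 s0A] : exists s0, s0 \in A by apply/card_gt0P; rewrite cardA.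
have c0 : 0 < ca (centre s0) by apply/card_gt0P; exists s0; rewrite inE s0A eqxx.
have l0 := centre_is_leaf c0.
case: (@arg_maxnP T (centre s0) predT (fun x => k * ca x + cl x) isT) => z _ zmax.
have zc0 := zmax (centre s0) isT; exists z; split; first by nia.
move=> x nxz; rewrite leqNgt; apply/negP => hx.
by move: nxz; rewrite (@heavy_unique x z) ?eqxx // /heavy; have := zmax x isT; lia.
Qed.

Lemma exists_light_set z : k + 1 <= k * ca z + cl z ->
  exists X : {set T}, [/\ z \notin X, #|X| = 3 * k./2 - 1 &
    forall x, x \in X -> 2 * (k * ca x + cl x) <= k + 1].
Proof.
move=> hz; set Q := [set x | 2 * (k * ca x + cl x) <= k + 1].
have zB : z \in ~: Q by rewrite !inE -ltnNge; lia.
(* Outside Q the A-degree is at least (k+3)/2, at z at least k+1; the A-degrees sum to 8k. *)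
have low : (k./2 + 2) * #|~: Q| + k./2 <= \sum_(x in ~: Q) (k * ca x + cl x).
  have -> : (k./2 + 2) * #|~: Q| + k./2 = \sum_(x in ~: Q) (k./2 + 2 + (x == z) * k./2).
    rewrite big_split /= sum_nat_const mulnC (bigD1 z zB) /= eqxx mul1n big1 ?addn0 //.
    by move=> x /andP[_ /negbTE ->].
  apply: leq_sum => x; rewrite !inE -ltnNge; case: eqP => [-> | _] /=; lia.
have up : \sum_(x in ~: Q) (k * ca x + cl x) <= 2 * (k * #|A|).
  by rewrite -(sum_design_deg hA) [X in _ <= X](bigID (mem (~: Q))) leq_addr.
rewrite cardA in up.
have cQ : 3 * k./2 - 1 <= #|Q| by move: (cardsC Q); rewrite cardT; nia.
have [X XQ cX] := exists_subset_card cQ.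
exists X; split=> // [|x /(subsetP XQ)]; last by rewrite inE.
by apply: contraTN zB => /(subsetP XQ) zQ; rewrite inE zQ.
Qed.

Lemma completable_four_stars : completable k A.
Proof.
have [z [hz zpeak]] := exists_peak.
have [X [zX cX Xlight]] := exists_light_set hz.
pose b x := (x != z) + (x \in X).
have E2 e : e \in leave A -> #|e| = 2 by rewrite inE => /andP[/eqP].
have sum_o : \sum_x k * b x = #|leave A|.
  rewrite -big_distrr big_split /= -(card_sumE (predC1 z)) -card_sumE cardC1 cX.
  by rewrite (card_leave hA) cardT cardA bin2; nia.
have deg_o x : x != z -> 2 * (k * b x) + (k - 1) <= 2 * deg (leave A) x.
  move=> nxz; have := deg_leave hA x; have := zpeak x nxz.
  rewrite (deg_design_edges hA) cardT /b nxz; case: (boolP (x \in X)) => [/Xlight|] /=; lia.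
have ob x : x != z -> k <= k * b x by move=> nxz; rewrite /b nxz; lia.
have oz : k * b z = 0 by rewrite /b eqxx (negbTE zX) muln0.
have [D orD] := orientation_exists E2 sum_o
  (card_induced_le_sum E2 (ltac:(by rewrite cardT)) sum_o oz ob deg_o).
have k_gt0 : 0 < k by lia.
exact: (completable_of_orientation (b := b) hA k_gt0 orD).
Qed.

End FourStars.

Theorem lemma11 (k : nat) (T : finType) (A : {set star T}) :
  3 <= k -> odd k -> #|T| = 3 * k + 1 ->
  partial_star_design k A -> #|A| = 4 -> ~ reducible k A ->
  completable k A.
Proof. exact: completable_four_stars. Qed.
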